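(* Let $Q$ be a finite quiver, let $A=\Bbbk Q/(\geq 2)$, let $J$ be the ideal of $A$ generated by all loops of $Q$, let $Q'$ be the quiver obtained from $Q$ by deleting all loops, let $C=\Bbbk Q'$ and $B=A/J\cong C/(\geq 2)$. Then there is a one-to-one correspondence between isomorphism classes $$\{\text{brick } A\text{-modules}\}\longleftrightarrow\{\text{brick } C\text{-modules annihilated by the ideal } (\geq 2) \text{ of } C\}.$$ More precisely, every brick $A$-module is annihilated by $J$ (hence is a $B$-module, hence a $C$-module annihilated by $(\geq 2)$), and conversely; and for brick $A$-modules $M,N$ there are natural isomorphisms $$\mathrm{Hom}_A(M,N)\cong \mathrm{Hom}_B(M,N)\cong \mathrm{Hom}_C(M,N).$$
   Context: $\Bbbk$ is an algebraically closed field. For a finite quiver $Q$, the path algebra $\Bbbk Q$ is generated by vertex idempotents $e_i$ and arrows $\alpha$ with $e_ie_j=\delta_{ij}e_i$, $e_i\alpha=\delta_{i,t(\alpha)}\alpha$, $\alpha e_j=\delta_{j,s(\alpha)}\alpha$ (so finite-dimensional left modules are representations of $Q$); $(\geq 2)$ denotes the ideal generated by all paths of length at least $2$. Modules are finite-dimensional left modules. A module $M$ is a brick if $\mathrm{End}(M)=\Bbbk$. A module over a quotient $R/I$ is identified with an $R$-module annihilated by $I$. *)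

From HB Require Import structures.
From mathcomp Require Import all_boot all_order all_algebra.
Set Implicit Arguments. Unset Strict Implicit. Unset Printing Implicit Defensive.
Import GRing.Theory.
Local Open Scope ring_scope.

(* A finite-dimensional left module over kQ is a representation: a vector space
   K^(rdim v) at each vertex, and for each arrow a a linear map
   K^(rdim (s a)) -> K^(rdim (t a)), encoded as a matrix acting on ROW vectors
   (v |-> v *m rmat a).  The path  b.a  (first a then b) acts as rmat a *m rmat b. *)
Record rep (K : fieldType) (V Ar : Type) (s t : Ar -> V) := Rep {
  rdim : V -> nat;
  rmat : forall a : Ar, 'M[K]_(rdim (s a), rdim (t a))
}.
Arguments Rep {K V Ar s t}.

Section Reps.
Variables (K : fieldType) (V : eqType) (Ar : Type) (s t : Ar -> V).

Definition is_hom (M N : rep K s t) (f : forall v, 'M[K]_(rdim M v, rdim N v)) :=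
  forall a, rmat M a *m f (t a) = f (s a) *m rmat N a.

Definition is_iso (M N : rep K s t) :=
  exists (f : forall v, 'M[K]_(rdim M v, rdim N v))
         (g : forall v, 'M[K]_(rdim N v, rdim M v)),
    [/\ is_hom f, is_hom g, (forall v, f v *m g v = 1%:M)
      & (forall v, g v *m f v = 1%:M)].

(* End(M) = k : the natural map k -> End(M) is bijective, i.e. M <> 0
   (injectivity) and every endomorphism is a scalar (surjectivity). *)
Definition brick (M : rep K s t) :=
  (exists v, rdim M v != 0%N) /\
  forall f : forall v, 'M[K]_(rdim M v, rdim M v),
    is_hom f -> exists c : K, forall v, f v = c%:M.

(* annihilated by the ideal (>= 2): every path of length 2 acts as zero
   (hence all longer paths too). *)
Definition rad2 (M : rep K s t) :=
  forall a b (H : t a = s b),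
    castmx (erefl, congr1 (rdim M) H) (rmat M a) *m rmat M b = 0.

Definition loops_zero (M : rep K s t) :=
  forall a, s a = t a -> rmat M a = 0.

Definition Ar' := {a : Ar | s a != t a}.
Definition s' (a : Ar') : V := s (val a).
Definition t' (a : Ar') : V := t (val a).

Definition restrict (M : rep K s t) : rep K s' t' :=
  Rep (rdim M) (fun a => rmat M (val a)).

Definition extend (N : rep K s' t') : rep K s t :=
  Rep (rdim N) (fun a =>
    match s a != t a as b
      return (s a != t a) = b -> 'M[K]_(rdim N (s a), rdim N (t a)) with
    | true => fun H => rmat N (exist _ a H)
    | false => fun _ => 0
    end erefl).

End Reps.
Arguments Ar' {V Ar} s t.
Arguments s' {V Ar} s t a.
Arguments t' {V Ar} s t a.

From HB Require Import structures.
From mathcomp Require Import all_boot all_order all_algebra.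
Local Open Scope ring_scope.
Import GRing.Theory.

Set Implicit Arguments.
Unset Strict Implicit.
Unset Printing Implicit Defensive.

(* If all paths of length two act as zero on M, a loop a at v defines an
   endomorphism of M (a at v, 0 elsewhere), since its composite with any arrow
   is such a path.  When M is a brick this endomorphism is a scalar c with
   c^2 = a^2 = 0, so a acts as zero.  Thus bricks over A are representations
   of Q' with zero loops, and for those A-linear and C-linear maps coincide. *)

Lemma scalar_mx_sqr_eq0 (R : idomainType) n (c : R) :
  c%:M *m c%:M = 0 :> 'M_n -> c%:M = 0 :> 'M_n.
Proof.
case: n => [|n]; first by move=> _; apply: flatmx0.
rewrite -scalar_mxM => /matrixP /(_ 0 0); rewrite !mxE eqxx !mulr1n.
by move/eqP; rewrite mulf_eq0 orbb => /eqP ->; rewrite raddf0.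
Qed.

Section CastProducts.
Variable R : nzRingType.

Lemma mulmx_conform_eq0 m n n' p p' (A : 'M[R]_(m, n)) (B : 'M_(n', p'))
    (C : 'M_(n, p)) (e : n = n') :
  castmx (erefl, e) A *m B = 0 -> p' = p -> A *m conform_mx C B = 0.
Proof.
case: n' / e B => B; rewrite castmx_id => AB0 ep.
by case: p / ep C => C; rewrite conform_mx_id.
Qed.

Lemma conform_mulmx_eq0 m m' n n' p (A : 'M[R]_(m', n')) (B : 'M_(n, p))
    (C : 'M_(m, n)) (e : n' = n) :
  castmx (erefl, e) A *m B = 0 -> m' = m -> conform_mx C A *m B = 0.
Proof.
case: n / e B C => B C; rewrite castmx_id => AB0 em.
by case: m / em C => C; rewrite conform_mx_id.
Qed.

End CastProducts.

Lemma conform_scalar_sqr_eq0 (R : idomainType) m n (A : 'M[R]_(m, n))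
    (e : n = m) c :
  castmx (erefl, e) A *m A = 0 -> conform_mx (0 : 'M_m) A = c%:M -> A = 0.
Proof.
case: m / e A => A; rewrite castmx_id conform_mx_id => A2_0 A_scalar.
by move: A2_0; rewrite A_scalar => /scalar_mx_sqr_eq0.
Qed.

Lemma is_iso_Rep (K : fieldType) (V : eqType) (Ar : Type) (s t : Ar -> V)
    (d : V -> nat) (m1 m2 : forall a, 'M[K]_(d (s a), d (t a))) :
  (forall a, m1 a = m2 a) -> is_iso (Rep d m1) (Rep d m2).
Proof.
move=> m12; exists (fun v => 1%:M), (fun v => 1%:M).
by split=> [a | a | v | v]; rewrite /= ?mulmx1 ?mul1mx ?m12.
Qed.

Section Quiver.
Variables (K : fieldType) (V : eqType) (Ar : Type) (s t : Ar -> V).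
Implicit Types (M : rep K s t) (N : rep K (s' s t) (t' s t)) (a : Ar).

Lemma rmat_extend N a (Ha : s a != t a) :
  rmat (extend N) a = rmat N (exist _ a Ha).
Proof.
rewrite /=; move: erefl; case: {2 3}(s a != t a) => [Ha'|]; last by rewrite Ha.
by rewrite (bool_irrelevance Ha' Ha).
Qed.

Lemma rmat_extend_loop N a : s a = t a -> rmat (extend N) a = 0.
Proof.
move=> loop_a; rewrite /=; move: erefl; case: {2 3}(s a != t a) => // Ha.
by exfalso; move: Ha; rewrite loop_a eqxx.
Qed.

(* [conform_mx 0] casts [rmat M a] to a square matrix at [s a] when [a] is a
   loop (and yields [0] otherwise). *)
Definition loop_endo M a : forall v, 'M[K]_(rdim M v, rdim M v) :=
  fun v => if v == s a then conform_mx 0 (rmat M a) else 0.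

(* Every composite of [loop_endo M a] with an arrow is a path of length 2. *)
Lemma loop_endo_is_hom M a : rad2 M -> s a = t a -> is_hom (loop_endo M a).
Proof.
move=> M_rad2 loop_a b.
have into_a (tb_sa : t b = s a) : rmat M b *m loop_endo M a (t b) = 0.
  rewrite /loop_endo (introT eqP tb_sa).
  by apply: mulmx_conform_eq0 (M_rad2 b a tb_sa) _; rewrite tb_sa loop_a.
have from_a (sb_sa : s b = s a) : loop_endo M a (s b) *m rmat M b = 0.
  have ta_sb : t a = s b by rewrite -loop_a sb_sa.
  rewrite /loop_endo (introT eqP sb_sa).
  by apply: conform_mulmx_eq0 (M_rad2 a b ta_sb) _; rewrite sb_sa.
have [/into_a ->|tb_a] := eqVneq (t b) (s a);
  have [/from_a ->|sb_a] := eqVneq (s b) (s a) => //;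
  by rewrite /loop_endo ?(negPf tb_a) ?(negPf sb_a) ?mulmx0 ?mul0mx.
Qed.

Lemma brick_loops_zero M : rad2 M -> brick M -> loops_zero M.
Proof.
move=> M_rad2 [_ M_brick] a loop_a.
have [c endo_scalar] := M_brick _ (loop_endo_is_hom M_rad2 loop_a).
have := endo_scalar (s a); rewrite /loop_endo eqxx.
exact: conform_scalar_sqr_eq0 (M_rad2 a a (esym loop_a)).
Qed.

Lemma is_hom_restrict M1 M2 (f : forall v, 'M[K]_(rdim M1 v, rdim M2 v)) :
  loops_zero M1 -> loops_zero M2 ->
  is_hom f <-> is_hom (M := restrict M1) (N := restrict M2) f.
Proof.
move=> M1_loops M2_loops; split=> [f_hom a | f_hom a]; first exact: f_hom.
have [loop_a | a_nonloop] := eqVneq (s a) (t a).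
  by rewrite M1_loops // M2_loops // mulmx0 mul0mx.
exact: f_hom (exist _ a a_nonloop).
Qed.

Lemma rad2_restrict M : rad2 M -> rad2 (restrict M).
Proof. by move=> M_rad2 a b; apply: M_rad2. Qed.

Lemma brick_restrict M : loops_zero M -> brick M -> brick (restrict M).
Proof.
move=> M_loops [M_nz M_brick]; split=> // f f_hom.
by apply: M_brick; apply/(is_hom_restrict _ M_loops M_loops).
Qed.

Lemma loops_zero_extend N : loops_zero (extend N).
Proof. exact: rmat_extend_loop. Qed.

Lemma rad2_extend N : rad2 N -> rad2 (extend N).
Proof.
move=> N_rad2 a b ta_sb.
have [loop_a | a_nonloop] := eqVneq (s a) (t a).
  by rewrite rmat_extend_loop // castmx_const mul0mx.
have [loop_b | b_nonloop] := eqVneq (s b) (t b).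
  by rewrite (rmat_extend_loop _ loop_b) mulmx0.
rewrite (rmat_extend _ a_nonloop) (rmat_extend _ b_nonloop).
exact: N_rad2 (exist _ a a_nonloop) (exist _ b b_nonloop) ta_sb.
Qed.

Lemma brick_extend N : brick N -> brick (extend N).
Proof.
move=> [N_nz N_brick]; split=> // f f_hom.
by apply: N_brick => -[a a_nonloop]; have := f_hom a; rewrite rmat_extend.
Qed.

Lemma extend_restrict_iso M : loops_zero M -> is_iso (extend (restrict M)) M.
Proof.
case: M => d m M_loops; apply: is_iso_Rep => a.
change (rmat (extend (restrict (Rep d m))) a = m a).
have [loop_a | a_nonloop] := eqVneq (s a) (t a).
  by rewrite rmat_extend_loop // (M_loops a loop_a : m a = 0).
exact: rmat_extend.
Qed.

Lemma restrict_extend_iso N : is_iso (restrict (extend N)) N.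
Proof.
by case: N => d m; apply: is_iso_Rep => -[a a_nonloop]; apply: rmat_extend.
Qed.

End Quiver.

Theorem theorem1p2 (K : closedFieldType) (V Ar : finType) (s t : Ar -> V) :
  (* every brick A-module (A = kQ/(>=2)) is annihilated by J *)
  (forall M : rep K s t, rad2 M -> brick M -> loops_zero M) /\
  (* brick A-modules give brick C-modules annihilated by (>=2) *)
  (forall M : rep K s t, rad2 M -> brick M ->
     rad2 (restrict M) /\ brick (restrict M)) /\
  (* conversely, brick C-modules annihilated by (>=2) give brick A-modules
     annihilated by J *)
  (forall N : rep K (s' s t) (t' s t), rad2 N -> brick N ->
     [/\ rad2 (extend N), brick (extend N) & loops_zero (extend N)]) /\
  (* the two constructions are mutually inverse up to isomorphism *)
  (forall M : rep K s t, loops_zero M -> is_iso (extend (restrict M)) M) /\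
  (forall N : rep K (s' s t) (t' s t), is_iso (restrict (extend N)) N) /\
  (* Hom_A(M,N) = Hom_B(M,N) = Hom_C(M,N) for brick A-modules M, N
     (the natural map being the identity on vertex-wise linear maps) *)
  (forall M N : rep K s t, rad2 M -> brick M -> rad2 N -> brick N ->
     forall f : forall v, 'M[K]_(rdim M v, rdim N v),
       is_hom f <-> is_hom (M := restrict M) (N := restrict N) f).
Proof.
split; first exact: brick_loops_zero.
split.
  move=> M M_rad2 M_brick; split; first exact: rad2_restrict.
  exact: brick_restrict (brick_loops_zero M_rad2 M_brick) M_brick.
split.
  move=> N N_rad2 N_brick; split.
  - exact: rad2_extend.
  - exact: brick_extend.
  - exact: loops_zero_extend.
split; first exact: extend_restrict_iso.
split; first exact: restrict_extend_iso.
move=> M N M_rad2 M_brick N_rad2 N_brick f.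
exact: is_hom_restrict (brick_loops_zero M_rad2 M_brick)
                       (brick_loops_zero N_rad2 N_brick).
Qed.
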